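(* Let $R$ be a commutative elementary divisor domain, let $E,\Phi$ be $n\times n$ $d$-matrices, and let $A=P_A^{-1}EQ_A^{-1}$ and $B=P_B^{-1}\Phi Q_B^{-1}$ with $P_A,Q_A,P_B,Q_B\in GL_n(R)$. Then $B$ is a left divisor of $A$ (i.e. $A=BC$ for some $C\in M_n(R)$) if and only if $P_B=LP_A$ for some $L\in\mathbf L(E,\Phi)$.
   Context: Elementary divisor domain: commutative integral domain over which every matrix is equivalent to a $d$-matrix, i.e. a diagonal matrix $\mathrm{diag}(\varphi_1,\dots)$ with $\varphi_i\mid\varphi_{i+1}$. For $n\times n$ $d$-matrices $E,\Phi$: $\mathbf L(E,\Phi)=\{L\in GL_n(R):\ \exists S\in M_n(R),\ LE=\Phi S\}$. *)

From mathcomp Require Import all_boot all_algebra.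
Set Implicit Arguments. Unset Strict Implicit. Unset Printing Implicit Defensive.
Import GRing.Theory.
Local Open Scope ring_scope.

Definition rdvd (R : comRingType) (a b : R) : Prop := exists c : R, b = c * a.

Definition is_dmx (R : comRingType) (m n : nat) (D : 'M[R]_(m, n)) : Prop :=
  (forall (i : 'I_m) (j : 'I_n), (i : nat) <> j -> D i j = 0) /\
  (forall (i1 i2 : 'I_m) (j1 j2 : 'I_n),
      (i1 : nat) = j1 -> (i2 : nat) = j2 -> (i2 : nat) = i1.+1 ->
      rdvd (D i1 j1) (D i2 j2)).

Definition elementary_divisor_domain (R : idomainType) : Prop :=
  forall (m n : nat) (A : 'M[R]_(m, n)),
    exists (P : 'M[R]_m) (Q : 'M[R]_n) (D : 'M[R]_(m, n)),
      [/\ P \in unitmx, Q \in unitmx, is_dmx D & P *m A *m Q = D].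

Definition Lset (R : idomainType) (n : nat) (E Phi : 'M[R]_n) (L : 'M[R]_n) : Prop :=
  L \in unitmx /\ exists S : 'M[R]_n, L *m E = Phi *m S.

From mathcomp Require Import all_boot all_algebra.
Set Implicit Arguments. Unset Strict Implicit. Unset Printing Implicit Defensive.
Local Open Scope ring_scope.

(* Left divisibility of matrices is invariant under multiplying either side on
   the right by an invertible matrix and both sides on the left by the same
   invertible matrix; so B | A reduces to Phi | (P_B P_A^-1) E, which is the
   defining property of L = P_B P_A^-1 in L(E, Phi). *)

Definition ldvdmx (R : pzRingType) (m n p : nat)
  (B : 'M[R]_(m, n)) (A : 'M[R]_(m, p)) : Prop :=
  exists C : 'M[R]_(n, p), A = B *m C.

Section LeftDivisibility.

Variable R : comUnitRingType.
Implicit Types m n p : nat.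

Lemma ldvdmx_mulr_unitl m n p (B : 'M[R]_(m, n)) (Q : 'M[R]_n)
    (A : 'M[R]_(m, p)) :
  Q \in unitmx -> ldvdmx (B *m Q) A <-> ldvdmx B A.
Proof.
move=> uQ; split=> [[C ->]|[C ->]].
  by exists (Q *m C); rewrite mulmxA.
by exists (invmx Q *m C); rewrite mulmxA -(mulmxA B) mulmxV // mulmx1.
Qed.

Lemma ldvdmx_mulr_unitr m n p (B : 'M[R]_(m, n)) (A : 'M[R]_(m, p))
    (Q : 'M[R]_p) :
  Q \in unitmx -> ldvdmx B (A *m Q) <-> ldvdmx B A.
Proof.
move=> uQ; split=> [[C eqAQ]|[C ->]].
  by exists (C *m invmx Q); rewrite mulmxA -eqAQ -mulmxA mulmxV // mulmx1.
by exists (C *m Q); rewrite mulmxA.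
Qed.

Lemma ldvdmx_mull_unit m n p (P : 'M[R]_m) (B : 'M[R]_(m, n))
    (A : 'M[R]_(m, p)) :
  P \in unitmx -> ldvdmx (P *m B) (P *m A) <-> ldvdmx B A.
Proof.
move=> uP; split=> [[C eqPA]|[C ->]]; exists C.
  by rewrite -[A]mul1mx -(mulVmx uP) -mulmxA eqPA !mulmxA mulVmx // mul1mx.
by rewrite mulmxA.
Qed.

Lemma ldvdmx_equiv n (E Phi PA QA PB QB : 'M[R]_n) :
  PA \in unitmx -> QA \in unitmx -> PB \in unitmx -> QB \in unitmx ->
  ldvdmx (invmx PB *m Phi *m invmx QB) (invmx PA *m E *m invmx QA)
  <-> ldvdmx Phi (PB *m invmx PA *m E).
Proof.
move=> uPA uQA uPB uQB.
have uQA' : invmx QA \in unitmx by rewrite unitmx_inv.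
have uQB' : invmx QB \in unitmx by rewrite unitmx_inv.
apply: (iff_trans (ldvdmx_mulr_unitr _ _ uQA')).
apply: (iff_trans (ldvdmx_mulr_unitl _ _ uQB')).
apply: (iff_trans (iff_sym (ldvdmx_mull_unit _ _ uPB))).
by rewrite mulmxA mulmxV // mul1mx !mulmxA.
Qed.

End LeftDivisibility.

Lemma LsetE (R : idomainType) n (E Phi L : 'M[R]_n) :
  Lset E Phi L <-> L \in unitmx /\ ldvdmx Phi (L *m E).
Proof. by []. Qed.

Theorem theorem4p2 (R : idomainType) (hR : elementary_divisor_domain R)
  (n : nat) (E Phi PA QA PB QB : 'M[R]_n) :
  is_dmx E -> is_dmx Phi ->
  PA \in unitmx -> QA \in unitmx -> PB \in unitmx -> QB \in unitmx ->
  (exists C : 'M[R]_n,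
      invmx PA *m E *m invmx QA = (invmx PB *m Phi *m invmx QB) *m C)
  <-> (exists L : 'M[R]_n, Lset E Phi L /\ PB = L *m PA).
Proof.
move=> _ _ uPA uQA uPB uQB.
apply: (iff_trans (ldvdmx_equiv E Phi uPA uQA uPB uQB)).
split=> [dvd_Phi|[L [/LsetE[uL dvd_Phi] ->]]].
  exists (PB *m invmx PA); split; last by rewrite -mulmxA mulVmx // mulmx1.
  by apply/LsetE; rewrite unitmx_mul uPB unitmx_inv uPA.
by rewrite -(mulmxA L) mulmxV // mulmx1.
Qed.
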